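(* Let $R$ be a ring. The following are equivalent: (1) $R$ is semisimple Artinian; (2) for every right $R$-module $E$ and any two submodules $A,B\subseteq E$ that are injective, the submodule $A\cap B$ is injective; (3) for every right $R$-module $E$ and any two submodules $A,B\subseteq E$ that are $\aleph_0$-injective, the submodule $A\cap B$ is $\aleph_0$-injective.
   Context: Rings are associative with identity; modules are unitary right modules. A right $R$-module $M$ is $\aleph_0$-injective if for every countably generated right ideal $I$ of $R$ and every $R$-homomorphism $f:I\to M$ there is an $R$-homomorphism $\bar f:R\to M$ with $\bar f|_I=f$. *)

(* Right R-modules are modelled as left modules over the
   converse ring R^c (MathComp's lmodType over R^c); the right action
   v . r is written  v *r r  :=  (r : R^c) *: v. *)
From HB Require Import structures.
From mathcomp Require Import all_boot all_order all_algebra.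
Set Implicit Arguments. Unset Strict Implicit. Unset Printing Implicit Defensive.
Import GRing.Theory.
Local Open Scope ring_scope.

Definition ract (R : pzRingType) (E : lmodType R^c) (v : E) (r : R) : E :=
  (r : R^c) *: v.
Notation "v *r r" := (ract v r) (at level 40, left associativity).

Section Defs.
Variable R : pzRingType.

Definition is_hom (X Y : lmodType R^c) (f : X -> Y) : Prop :=
  (forall x y, f (x + y) = f x + f y) /\ (forall x (r : R), f (x *r r) = f x *r r).

Definition is_submodule (E : lmodType R^c) (A : E -> Prop) : Prop :=
  [/\ A 0, (forall x y, A x -> A y -> A (x + y)) & (forall x (r : R), A x -> A (x *r r))].

Definition right_ideal (I : R -> Prop) : Prop :=
  [/\ I 0, (forall x y, I x -> I y -> I (x + y)) & (forall x r, I x -> I (x * r))].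

Definition countably_generated (I : R -> Prop) : Prop :=
  exists g : nat -> R, forall x,
    I x <-> exists (n : nat) (rs : nat -> R), x = \sum_(i < n) g i * rs i.

(** Homomorphisms into A are
    represented as homomorphisms into E with image contained in A. *)
Definition injective_sub (E : lmodType R^c) (A : E -> Prop) : Prop :=
  forall (X Y : lmodType R^c) (i : X -> Y) (f : X -> E),
    is_hom i -> injective i -> is_hom f -> (forall x, A (f x)) ->
    exists g : Y -> E, [/\ is_hom g, (forall y, A (g y)) & (forall x, g (i x) = f x)].

Definition aleph0_injective_sub (E : lmodType R^c) (A : E -> Prop) : Prop :=
  forall (I : R -> Prop) (f : R -> E),
    right_ideal I -> countably_generated I ->
    (forall x y, I x -> I y -> f (x + y) = f x + f y) ->
    (forall x r, I x -> f (x * r) = f x *r r) ->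
    (forall x, I x -> A (f x)) ->
    exists g : R -> E,
      [/\ (forall x y, g (x + y) = g x + g y),
          (forall x r, g (x * r) = g x *r r),
          (forall x, A (g x)) &
          (forall x, I x -> g x = f x)].

Definition right_artinian : Prop :=
  forall I : nat -> R -> Prop,
    (forall n, right_ideal (I n)) ->
    (forall n x, I n.+1 x -> I n x) ->
    exists N, forall m, (N <= m)%N -> forall x, I m x <-> I N x.

Definition every_right_ideal_summand : Prop :=
  forall I, right_ideal I ->
    exists J, [/\ right_ideal J,
                  (forall x, I x -> J x -> x = 0) &
                  (forall x, exists a b, [/\ I a, J b & x = a + b])].

Definition semisimple_artinian : Prop :=
  right_artinian /\ every_right_ideal_summand.

End Defs.

From HB Require Import structures.
From mathcomp Require Import all_boot all_order all_algebra.
From mathcomp Require Import boolp classical_sets.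
Set Implicit Arguments. Unset Strict Implicit. Unset Printing Implicit Defensive.
Import Order.TTheory GRing.Theory Num.Theory.
Local Open Scope ring_scope.
Local Open Scope classical_set_scope.

(* Over a semisimple Artinian ring every right ideal is generated by an idempotent, so every
   homomorphism from a right ideal extends to R and, by Baer's criterion, every module is
   injective.  Conversely, let C be a right ideal.  Embed R into an injective module Q1 and
   Q1 / C into an injective module Q2 by some phi.  In Q1 x Q2 the graphs of 0 and of phi are
   injective submodules meeting in a copy of C; extending the embedding of C into this
   intersection to all of R shows that C = eR for some e in C.  If this holds for every
   countably generated right ideal it holds for every right ideal (build a sequence in a
   given ideal, each term outside the span of the previous ones), and then R is semisimple
   Artinian.  The injective modules used are powers of Hom_Z(R, Q/Z), injective because
   Q/Z is a divisible group. *)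

(** * Baer's criterion *)

Section BaerCondition.
Variables (K : pzRingType) (E : lmodType K).

Definition lideal (I : K -> Prop) :=
  [/\ I 0, (forall x y, I x -> I y -> I (x + y)) & (forall x k, I x -> I (k * x))].

(* With K := R^c: every homomorphism from the right ideal I of R into D extends to R, in
   exactly the form used by aleph0_injective_sub. *)
Definition ideal_ext (I : K -> Prop) (D : E -> Prop) :=
  forall h : K -> E,
    (forall x y, I x -> I y -> h (x + y) = h x + h y) ->
    (forall x k, I x -> h (k * x) = k *: h x) ->
    (forall x, I x -> D (h x)) ->
  exists g : K -> E,
    [/\ (forall x y, g (x + y) = g x + g y), (forall x k, g (k * x) = k *: g x),
        (forall x, D (g x)) & (forall x, I x -> g x = h x)].

Definition baer (D : E -> Prop) := forall I, lideal I -> ideal_ext I D.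

End BaerCondition.

Section LinearGraphs.
Variables (K : pzRingType) (Y E : lmodType K).

(* Partial linear maps Y -> E are handled through their graphs: submodules of Y * E
   meeting 0 * E trivially. *)
Definition lin_graph (G : set (Y * E)) :=
  [/\ G 0, (forall a b, G a -> G b -> G (a + b)), (forall k a, G a -> G (k *: a))
    & forall e, G (0, e) -> e = 0].

Lemma lin_graph_fun G y e e' : lin_graph G -> G (y, e) -> G (y, e') -> e' = e.
Proof.
case=> _ GD GZ G0 Gye Gye'; apply/eqP; rewrite -subr_eq0; apply/eqP/G0.
have -> : (0, e' - e) = (y, e') + (-1) *: (y, e).
  by rewrite scaleN1r; congr (_, _); rewrite /= subrr.
by apply: GD => //; apply: GZ.
Qed.

End LinearGraphs.

Section BaerCriterion.
Variables (K : pzRingType) (Y E : lmodType K) (D : E -> Prop) (G0 : set (Y * E)).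
Hypotheses (addD : forall a b, D a -> D b -> D (a + b)) (baerD : baer D).
Hypotheses (linG0 : lin_graph G0) (G0D : forall z, G0 z -> D z.2).

Definition good_graph (G : set (Y * E)) :=
  [/\ lin_graph G, G0 `<=` G & forall z, G z -> D z.2].

Lemma good_graph0 : good_graph G0.
Proof. by split. Qed.

Lemma good_graph_union (U : set (Y * E)) : G0 `<=` U ->
  (forall a b, U a -> U b -> exists2 G, good_graph G /\ G `<=` U & G a /\ G b) ->
  good_graph U.
Proof.
move=> G0U loc; have loc1 a : U a -> exists2 G, good_graph G /\ G `<=` U & G a.
  by move=> Ua; have [G GU [Ga _]] := loc a a Ua Ua; exists G.
split=> //; last by move=> z /loc1 [G [[_ _ GD] _] /GD].
split; first by case: linG0 => + _ _ _; apply: G0U.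
- move=> a b Ua Ub; have [G [[[_ GD _ _] _ _] GU] [Ga Gb]] := loc a b Ua Ub.
  exact/GU/GD.
- move=> k a /loc1 [G [[[_ _ GZ _] _ _] GU] Ga]; exact/GU/GZ.
- by move=> e /loc1 [G [[[_ _ _ G0e] _ _] _] /G0e].
Qed.

Section OneStep.
Variables (G : set (Y * E)) (y : Y).
Hypotheses (goodG : good_graph G) (Gy : forall e, ~ G (y, e)).

Let Iy k := exists e, G (k *: y, e).
Let h k := if pselect (Iy k) is left Ik then projT1 (cid Ik) else 0.

Let Gh k : Iy k -> G (k *: y, h k).
Proof. by rewrite /h; case: pselect => // Ik _; case: cid. Qed.

Let Gh_eq k e : G (k *: y, e) -> h k = e.
Proof.
by case: goodG => linG _ _ Gke; apply: lin_graph_fun linG Gke (Gh (ex_intro _ e Gke)).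
Qed.

Lemma good_graph_extend : exists2 G', good_graph G' & G `<` G'.
Proof.
have [[G00 GD GZ Gf] G0G GDv] := goodG.
have lI : lideal Iy.
  split; first by exists 0; rewrite scale0r.
  - by move=> a b [ea Ga] [eb Gb]; exists (ea + eb); rewrite scalerDl; apply: GD Ga Gb.
  - by move=> a k [e Ga]; exists (k *: e); rewrite -scalerA; apply: GZ Ga.
have [h' [h'D h'Z h'Dv h'h]] : exists g : K -> E,
    [/\ (forall a b, g (a + b) = g a + g b), (forall a k, g (k * a) = k *: g a),
        (forall a, D (g a)) & (forall a, Iy a -> g a = h a)].
  apply: baerD => // [a b Ia Ib|a k Ia|a /Gh /GDv //].
    by apply: Gh_eq; rewrite scalerDl; exact: (GD _ _ (Gh Ia) (Gh Ib)).
  by apply: Gh_eq; rewrite -scalerA; exact: (GZ k _ (Gh Ia)).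
have h'0 : h' 0 = 0 by apply: (addIr (h' 0)); rewrite -h'D !add0r.
pose G' := [set z | exists q e k, G (q, e) /\ z = (q + k *: y, e + h' k)].
have GG' : G `<=` G' by move=> [q e] Gqe; exists q, e, 0; rewrite scale0r h'0 !addr0.
exists G'; last first.
  split=> // sub; apply: (@Gy (h' 1)); apply: sub.
  by exists 0, 0, 1; rewrite scale1r !add0r.
split; last first.
- by move=> _ [q [e [k [Gqe ->]]]]; apply: addD; [apply: GDv Gqe|].
- by move=> z /G0G /GG'.
split.
- exact: GG' _ G00.
- move=> _ _ [q1 [e1 [k1 [G1 ->]]]] [q2 [e2 [k2 [G2 ->]]]].
  exists (q1 + q2), (e1 + e2), (k1 + k2); split; first exact: (GD _ _ G1 G2).
  by rewrite scalerDl h'D; congr (_, _); rewrite /= addrACA.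
- move=> k' _ [q [e [k [Gqe ->]]]]; exists (k' *: q), (k' *: e), (k' * k).
  by split; [exact: (GZ k' _ Gqe) | rewrite h'Z; congr (_, _); rewrite /= scalerDr ?scalerA].
- move=> e' [q [e [k [Gqe [q0 ->]]]]].
  have Gk : G ((- k) *: y, e).
    by rewrite scaleNr (_ : - _ = q) //; apply/esym/eqP; rewrite -addr_eq0 -q0.
  have Ik : Iy (- k) by exists e.
  by rewrite -(Gh_eq Gk) -(h'h _ Ik) -h'D addNr h'0.
Qed.

End OneStep.

Lemma good_graph_maximal : exists2 G, good_graph G & forall G', good_graph G' -> ~ G `<` G'.
Proof.
(* shifted by G0 because Zorn_bigcup also bounds the empty chain, and set0 is not good *)
pose P := [set X | good_graph (G0 `|` X)].
have [A [PA Amax]] : exists A, P A /\ forall B, A `<` B -> ~ P B.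
  apply: Zorn_bigcup => F FP Ftot; apply: good_graph_union => [z|]; first by left.
  have inX z : (G0 `|` \bigcup_(X in F) X) z ->
      exists2 X, F X \/ X = set0 & (G0 `|` X) z.
    by case=> [G0z|[X FX Xz]]; [exists set0; [right|left] | exists X; [left|right]].
  have goodX X : F X \/ X = set0 -> good_graph (G0 `|` X).
    by case=> [/FP //|->]; rewrite setU0; apply: good_graph0.
  have subX X : F X \/ X = set0 -> G0 `|` X `<=` G0 `|` \bigcup_(X in F) X.
    by case=> [FX z [G0z|Xz]|-> z [G0z|//]]; [left|right; exists X|left].
  move=> a b /inX [Xa FXa Xaa] /inX [Xb FXb Xbb].
  have [sab|sba] : Xa `<=` Xb \/ Xb `<=` Xa.
  - case: FXa => [FXa|->]; last by left.
    by case: FXb => [FXb|->]; [apply: Ftot | right].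
  - exists (G0 `|` Xb); [split; [exact: goodX | exact: subX] |].
    by split=> //; case: Xaa => [?|/sab ?]; [left|right].
  - exists (G0 `|` Xa); [split; [exact: goodX | exact: subX] |].
    by split=> //; case: Xbb => [?|/sba ?]; [left|right].
exists (G0 `|` A) => // G' goodG' [sub nsub].
have G0G' : G0 `<=` G' by case: goodG'.
apply: (Amax G'); last by rewrite /P /= (setUidPr _ _).2.
split=> [z Az|G'A]; first by apply: sub; right.
by apply: nsub => z /G'A; right.
Qed.

Theorem baer_criterion : exists g : Y -> E,
  [/\ (forall a b, g (a + b) = g a + g b), (forall k a, g (k *: a) = k *: g a),
      (forall a, D (g a)) & (forall z, G0 z -> g z.1 = z.2)].
Proof.
have [G goodG Gmax] := good_graph_maximal.
have total a : exists e, G (a, e).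
  apply: contrapT => /forallNP noe.
  by have [G' /Gmax] := good_graph_extend goodG noe.
have [linG G0G GDv] := goodG; have [_ GD GZ _] := linG.
pose g a := projT1 (cid (total a)).
have gP a : G (a, g a) by rewrite /g; case: cid.
have g_eq a e : G (a, e) -> g a = e by move/(lin_graph_fun linG) /(_ (gP a)).
exists g; split.
- by move=> a b; apply: g_eq; apply: (GD (a, g a) (b, g b)).
- by move=> k a; apply: g_eq; apply: (GZ k (a, g a)).
- by move=> a; apply: (GDv (a, g a)).
- by move=> [a e] G0ae; apply/g_eq/G0G.
Qed.

End BaerCriterion.

(** * The divisible group Q/Z *)

Definition frac (x : rat) : rat := x - (Num.floor x)%:~R.

Lemma fracDz x (m : int) : frac (x + m%:~R) = frac x.
Proof.
rewrite /frac floorDrz ?intr_int // intrKfloor rmorphD /=.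
by rewrite opprD addrACA subrr addr0.
Qed.

Lemma frac_id x : frac (frac x) = frac x.
Proof. by rewrite {2}/frac -rmorphN fracDz. Qed.

Lemma fracDl x y : frac (frac x + y) = frac (x + y).
Proof. by rewrite {2}/frac addrAC -rmorphN fracDz. Qed.

Lemma fracN x : frac (- frac x) = frac (- x).
Proof. by rewrite {2}/frac opprB addrC fracDz. Qed.

(* Q/Z, represented by the fractional parts in [0, 1). *)
Definition QZ := {q : rat | frac q == q}.
HB.instance Definition _ := [isSub for (fun x : QZ => sval x)].
HB.instance Definition _ := [Choice of QZ by <:].

Definition qz_of (q : rat) : QZ := exist _ (frac q) (introT eqP (frac_id q)).

Lemma qz_ofK (a : QZ) : qz_of (val a) = a.
Proof. by apply: val_inj => /=; apply/eqP; case: a. Qed.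

Lemma qz_of_eq x y : x - y \is a Num.int -> qz_of x = qz_of y.
Proof.
by move=> /intrP [m e]; apply: val_inj => /=; rewrite -(fracDz y m) -e addrC subrK.
Qed.

Definition qz_add (a b : QZ) := qz_of (val a + val b).
Definition qz_opp (a : QZ) := qz_of (- val a).

Lemma qz_addE x y : qz_add (qz_of x) (qz_of y) = qz_of (x + y).
Proof. by apply: val_inj; rewrite /= fracDl addrC fracDl addrC. Qed.

Lemma qz_oppE x : qz_opp (qz_of x) = qz_of (- x).
Proof. by apply: val_inj; rewrite /= fracN. Qed.

Lemma qz_addA : associative qz_add.
Proof. by move=> a b c; rewrite -(qz_ofK a) -(qz_ofK b) -(qz_ofK c) !qz_addE addrA. Qed.

Lemma qz_addC : commutative qz_add.
Proof. by move=> a b; rewrite -(qz_ofK a) -(qz_ofK b) !qz_addE addrC. Qed.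

Lemma qz_add0 : left_id (qz_of 0) qz_add.
Proof. by move=> a; rewrite -(qz_ofK a) qz_addE add0r. Qed.

Lemma qz_addN : left_inverse (qz_of 0) qz_opp qz_add.
Proof. by move=> a; rewrite -(qz_ofK a) qz_oppE qz_addE addNr. Qed.

HB.instance Definition _ := GRing.isZmodule.Build QZ qz_addA qz_addC qz_add0 qz_addN.

Lemma qz_of_is_zmod_morphism : zmod_morphism qz_of.
Proof.
by move=> x y; rewrite -[_ - qz_of y]/(qz_add (qz_of x) (qz_opp (qz_of y))) qz_oppE qz_addE.
Qed.

HB.instance Definition _ :=
  GRing.isZmodMorphism.Build rat QZ qz_of qz_of_is_zmod_morphism.

Lemma qz_of_int (n : int) : qz_of n%:~R = 0.
Proof. by apply: qz_of_eq; rewrite subr0 intr_int. Qed.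

Lemma qz_divisible (a : QZ) (n : int) : n != 0 -> exists s : QZ, s *~ n = a.
Proof.
move=> n0; exists (qz_of (val a / n%:~R)).
by rewrite -raddfMz -mulrzr mulfVK ?intr_eq0 //; exact: qz_ofK.
Qed.

Lemma qz_of_inv_neq0 (n : int) : 1 < n -> qz_of n%:~R^-1 != 0.
Proof.
move=> n1; apply/eqP => /(congr1 val); rewrite /= /frac.
have -> : Num.floor (n%:~R^-1 : rat) = 0.
  apply: floor_def; rewrite add0r !rmorph0 rmorph1 invr_ge0 ler0z.
  rewrite (le_trans _ (ltW n1)) //= invf_lt1 ?ltr0z ?ltr1z //.
  by rewrite (lt_trans _ n1).
rewrite rmorph0 subr0 => /eqP; rewrite invr_eq0 intr_eq0 => /eqP n0.
by move: n1; rewrite n0.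
Qed.

Lemma qz_of_invMz (n : int) : qz_of n%:~R^-1 *~ n = 0.
Proof.
have [->|n0] := eqVneq n 0; first by rewrite mulr0z.
by rewrite -raddfMz -mulrzl mulfV ?intr_eq0 //; exact: (qz_of_int 1).
Qed.

Lemma subgroupMz (V : zmodType) (P : V -> Prop) :
  P 0 -> (forall x y, P x -> P y -> P (x + y)) -> (forall x, P x -> P (- x)) ->
  forall k x, P x -> P (x *~ k).
Proof.
move=> P0 PD PN k x Px; have PMn n : P (x *+ n).
  by elim: n => [|n IH]; rewrite ?mulr0n // mulrS; apply: PD.
by case: k => n; rewrite ?NegzE ?mulrNz; [|apply: PN]; apply: PMn.
Qed.

Lemma subgroup_lin_graph (V W : zmodType) (G : set (zmodule V * zmodule W)) :
  G 0 -> (forall a b, G a -> G b -> G (a + b)) -> (forall a, G a -> G (- a)) ->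
  (forall e, G (0, e) -> e = 0) -> lin_graph G.
Proof.
move=> G0 GD GN Gf; split=> // k a Ga.
by rewrite -[k]intz scaler_int; apply: subgroupMz.
Qed.

Lemma int_ideal_dvd (I : int -> Prop) :
  lideal I -> exists2 n : int, 0 <= n & forall x, I x <-> (n %| x)%Z.
Proof.
case=> I0 ID IM; have Idvd n x : I n -> (n %| x)%Z -> I x.
  by move=> In /dvdzP [q ->]; apply: IM.
have [Ipos|Izero] := pselect (exists m : nat, `[< (0 < m)%N /\ I m >]); last first.
  exists 0 => // x; split=> [Ix|]; last by rewrite dvd0z => /eqP ->.
  rewrite dvd0z; apply: contrapT => x0; apply: Izero; exists `|x|%N; apply/asboolP.
  by rewrite absz_gt0 abszEsg; split; [apply/negP | apply: IM].
case: (ex_minnP Ipos) => m /asboolP [m0 Im] mmin; exists m%:Z => // x.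
split=> [Ix|]; last exact: Idvd.
have Ir : I (x %% m)%Z.
  rewrite (_ : (x %% m)%Z = x + (- (x %/ m)%Z) * m); last first.
    by rewrite mulNr {2}(divz_eq x m) addrAC subrr add0r.
  exact/ID/IM.
apply/dvdz_mod0P; apply: contrapT => r0.
have r_ge0 : 0 <= (x %% m)%Z by apply: modz_ge0; rewrite eqz_nat -lt0n.
have : (m <= `|(x %% m)%Z|)%N.
  by apply: mmin; apply/asboolP; rewrite absz_gt0 gez0_abs //; split=> //; apply/eqP.
by rewrite -lez_nat gez0_abs // leNgt ltz_pmod.
Qed.

Lemma qz_baer : baer (fun _ : zmodule QZ => True).
Proof.
move=> I lI h hD hZ _; have [n _ In] := int_ideal_dvd lI.
have [s hs] : exists s : QZ, s *~ n = h n.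
  have [->|n0] := eqVneq n 0; last exact: qz_divisible.
  exists 0; have := hZ 0 0; rewrite mulr0z mulr0 scale0r => -> //.
  by apply/In; rewrite dvdz0.
exists (fun k => k *: (s : zmodule QZ)); split=> // [x y|x k|x /In /dvdzP [q ->]].
- by rewrite scalerDl.
- by rewrite scalerA.
- by rewrite hZ -?scalerA; [congr (_ *: _) | apply/In].
Qed.

Lemma qz_extend (V : zmodType) (P : V -> Prop) (f : V -> QZ) :
  P 0 -> (forall x y, P x -> P y -> P (x + y)) -> (forall x, P x -> P (- x)) ->
  (forall x y, P x -> P y -> f (x + y) = f x + f y) ->
  exists g : V -> QZ, (forall x y, g (x + y) = g x + g y) /\ (forall x, P x -> g x = f x).
Proof.
move=> P0 PD PN fD; have f0 : f 0 = 0 by apply: (addIr (f 0)); rewrite -fD // !add0r.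
have fN x : P x -> f (- x) = - f x.
  by move=> Px; apply/eqP; rewrite -addr_eq0 -fD ?addNr ?f0 //; apply: PN.
pose G0 (z : zmodule V * zmodule QZ) := P z.1 /\ z.2 = f z.1.
have linG0 : lin_graph G0.
  apply: subgroup_lin_graph.
  - by split; rewrite //= f0.
  - by move=> [x _] [y _] [/= Px ->] [/= Py ->]; split; [apply: PD | rewrite /= fD].
  - by move=> [x _] [/= Px ->]; split; [apply: PN | rewrite /= fN].
  - by move=> e [_ /= ->].
have [g [gD _ _ gG0]] := baer_criterion (fun _ _ _ _ => I) qz_baer linG0 (fun _ _ => I).
by exists g; split=> // x Px; apply: (gG0 (x, f x)).
Qed.

Lemma qz_separate (V : zmodType) (K : V -> Prop) (w : V) :
  K 0 -> (forall x y, K x -> K y -> K (x + y)) -> (forall x, K x -> K (- x)) -> ~ K w ->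
  exists chi : V -> QZ, [/\ forall x y, chi (x + y) = chi x + chi y,
                            forall x, K x -> chi x = 0 & chi w != 0].
Proof.
move=> K0 KD KN Kw; have KMz := subgroupMz K0 KD KN.
have [n n_ge0 Kn] : exists2 n : int, 0 <= n & forall k, K (w *~ k) <-> (n %| k)%Z.
  apply: int_ideal_dvd; split=> [|x y Kx Ky|x k Kx]; rewrite ?mulrzDr -?mulrzA_C //.
  - exact: KD.
  - exact: KMz.
have n_neq1 : n != 1 by apply: contra_notN Kw => /eqP n1; rewrite -[w]mulr1z Kn n1.
(* an element of order exactly n in Q/Z, or of order 2 if n = 0 *)
pose s := qz_of (if n == 0 then 2 else n)%:~R^-1.
have s_neq0 : s != 0.
  apply: qz_of_inv_neq0; case: eqP => // n0.
  by rewrite lt_neqAle eq_sym n_neq1 -gtz0_ge1 lt_def n_ge0 andbT; apply/eqP.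
have sK k : K (w *~ k) -> s *~ k = 0.
  move=> /Kn /dvdzP [q ->]; rewrite mulrC mulrzA /s.
  by case: eqP => [->|_]; rewrite ?mulr0z ?qz_of_invMz mul0rz.
pose G0 := [set z : zmodule V * zmodule QZ | exists x k, K x /\ z = (x + w *~ k, s *~ k)].
have linG0 : lin_graph G0.
  apply: subgroup_lin_graph.
  - by exists 0, 0; rewrite !mulr0z addr0.
  - move=> _ _ [x [k [Kx ->]]] [y [l [Ky ->]]]; exists (x + y), (k + l).
    by split; [exact: KD | rewrite !mulrzDr; congr (_, _); rewrite /= addrACA].
  - move=> _ [x [k [Kx ->]]]; exists (- x), (- k).
    by split; [exact: KN | rewrite !mulrNz; congr (_, _); rewrite /= opprD].
  - move=> e [x [k [Kx [xk ->]]]]; apply: sK.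
    by rewrite (_ : w *~ k = - x); [apply: KN | apply/eqP; rewrite -addr_eq0 addrC -xk].
have [chi [chiD _ _ chiG0]] :=
  baer_criterion (fun _ _ _ _ => I) qz_baer linG0 (fun _ _ => I).
have chiE x k : K x -> chi (x + w *~ k) = s *~ k.
  by move=> Kx; apply: (chiG0 (_, _)); exists x, k.
exists chi; split=> // [x Kx|]; first by rewrite -[x]addr0 -(mulr0z w) chiE.
by rewrite -[w]add0r -[w in _ + w]mulr1z chiE.
Qed.

(** * Character modules *)

Lemma hom0 (R : pzRingType) (X Y : lmodType R^c) (f : X -> Y) : is_hom f -> f 0 = 0.
Proof. by case=> fD _; apply: (addIr (f 0)); rewrite -fD !add0r. Qed.

Lemma homB (R : pzRingType) (X Y : lmodType R^c) (f : X -> Y) x y :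
  is_hom f -> f (x - y) = f x - f y.
Proof. by case=> fD _; apply: (addIr (f y)); rewrite -fD !subrK. Qed.

(* Hom_Z(R, Q/Z)^N, a right R-module through (F r)(w, s) = F(w, r s). *)
Definition char_power (R : pzRingType) (N : Type) :=
  {F : N -> R -> QZ | forall w a b, F w (a + b) = F w a + F w b}.

HB.instance Definition _ R N := gen_eqMixin (char_power R N).
HB.instance Definition _ R N := gen_choiceMixin (char_power R N).

Section CharPowerModule.
Variables (R : pzRingType) (N : Type).
Local Notation C := (char_power R N).

Definition char_fun (F : C) := sval F.

Lemma char_funD (F : C) w a b : char_fun F w (a + b) = char_fun F w a + char_fun F w b.
Proof. exact: (svalP F w a b). Qed.

Lemma char_power_ext (F G : C) : (forall w s, char_fun F w s = char_fun G w s) -> F = G.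
Proof. by case: F G => f hf [g hg] /= fg; apply: eq_exist; do 2 apply: funext => ?. Qed.

Definition mk_char (f : N -> R -> QZ) fD : C := exist _ f fD.

Definition char_zero := @mk_char (fun _ _ => 0) (fun _ _ _ => esym (addr0 0)).
Definition char_add (F G : C) := @mk_char (fun w s => char_fun F w s + char_fun G w s)
  (fun w a b => etrans (congr2 +%R (char_funD F w a b) (char_funD G w a b)) (addrACA _ _ _ _)).
Definition char_opp (F : C) := @mk_char (fun w s => - char_fun F w s)
  (fun w a b => etrans (congr1 -%R (char_funD F w a b)) (opprD _ _)).

Lemma char_addA : associative char_add.
Proof. by move=> F G H; apply: char_power_ext => w s /=; rewrite addrA. Qed.
Lemma char_addC : commutative char_add.
Proof. by move=> F G; apply: char_power_ext => w s /=; rewrite addrC. Qed.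
Lemma char_add0 : left_id char_zero char_add.
Proof. by move=> F; apply: char_power_ext => w s /=; rewrite add0r. Qed.
Lemma char_addN : left_inverse char_zero char_opp char_add.
Proof. by move=> F; apply: char_power_ext => w s /=; rewrite addNr. Qed.

HB.instance Definition _ := GRing.isZmodule.Build C char_addA char_addC char_add0 char_addN.

Definition char_scale (r : R^c) (F : C) := @mk_char (fun w s => char_fun F w ((r : R) * s))
  (fun w a b => etrans (congr1 _ (mulrDr _ _ _)) (char_funD F w _ _)).

Lemma char_scaleA a b (F : C) : char_scale a (char_scale b F) = char_scale (a * b) F.
Proof. by apply: char_power_ext => w s /=; rewrite mulrA. Qed.
Lemma char_scale1 : left_id 1 char_scale.
Proof. by move=> F; apply: char_power_ext => w s /=; rewrite mul1r. Qed.
Lemma char_scaleDr : right_distributive char_scale +%R.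
Proof. by move=> r F G; apply: char_power_ext. Qed.
Lemma char_scaleDl (F : C) : {morph char_scale^~ F : a b / a + b}.
Proof. by move=> a b; apply: char_power_ext => w s /=; rewrite mulrDl char_funD. Qed.

HB.instance Definition _ :=
  GRing.Zmodule_isLmodule.Build R^c C char_scaleA char_scale1 char_scaleDr char_scaleDl.

Lemma char_power_baer : baer (fun _ : C => True).
Proof.
move=> I [I0 ID IM] h hD hZ _.
have IN x : I x -> I (- x) by move=> Ix; rewrite -mulN1r; apply: IM.
have [mu muP] := choice (fun w => @qz_extend _ I (fun x => char_fun (h x) w 1) I0 ID IN
  (fun x y Ix Iy => congr1 (fun F => char_fun F w 1) (hD x y Ix Iy))).
pose h' r := @mk_char (fun w s => mu w ((r : R) * s))
  (fun w a b => etrans (congr1 _ (mulrDr _ _ _)) ((muP w).1 _ _)).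
exists h'; split=> // [x y|x k|x Ix]; apply: char_power_ext => w s /=.
- by rewrite mulrDl (muP w).1.
- by rewrite mulrA.
- rewrite (muP w).2; last exact: IM.
  by rewrite -[(x : R) * s]/((s : R^c) * x) hZ //= mulr1.
Qed.

End CharPowerModule.

Lemma char_power_kernel (R : pzRingType) (M : lmodType R^c) (K : M -> Prop) : is_submodule K ->
  exists phi : M -> char_power R M, is_hom phi /\ forall v, phi v = 0 <-> K v.
Proof.
case=> K0 KD KZ; have KN x : K x -> K (- x) by move=> Kx; rewrite -scaleN1r; apply: KZ.
have chi_ex w : exists chi : M -> QZ, [/\ forall x y, chi (x + y) = chi x + chi y,
    forall x, K x -> chi x = 0 & ~ K w -> chi w != 0].
  have [Kw|Kw] := pselect (K w).
    by exists (fun _ => 0); split=> // x y; rewrite addr0.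
  by have [c [cD cK cw]] := qz_separate K0 KD KN Kw; exists c; split.
have [chi chiP] := choice chi_ex.
have chiD w x y : chi w (x + y) = chi w x + chi w y by case: (chiP w).
have chiK w x : K x -> chi w x = 0 by case: (chiP w) => _ + _; apply.
pose phi v := @mk_char R M (fun w s => chi w (v *r s))
  (fun w a b => etrans (congr1 _ (scalerDl _ _ _)) (chiD _ _ _)).
exists phi; split; first split=> [x y|x r]; try apply: char_power_ext => w s /=.
- by rewrite /ract scalerDr chiD.
- by rewrite /ract scalerA.
split=> [phi0|Kv]; last first.
  by apply: char_power_ext => w s /=; rewrite chiK //; apply: KZ.
apply: contrapT => Kv; have [_ _ /(_ Kv) /eqP] := chiP v; apply.
by have /= := congr1 (fun F => char_fun F v 1) phi0; rewrite /ract scale1r.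
Qed.

(** * Injectivity and Baer's condition *)

(* The unused proof argument keys the module instances declared below. *)
Definition submod_type (R : pzRingType) (M : lmodType R^c) (P : M -> Prop)
  (subP : is_submodule P) : Type := {x : M | P x}.

HB.instance Definition _ R M P subP := gen_eqMixin (@submod_type R M P subP).
HB.instance Definition _ R M P subP := gen_choiceMixin (@submod_type R M P subP).

Section SubmoduleType.
Variables (R : pzRingType) (M : lmodType R^c) (P : M -> Prop) (subP : is_submodule P).
Local Notation S := (submod_type subP).

Let P0 : P 0. Proof. by case: subP. Qed.
Let PD x y : P x -> P y -> P (x + y). Proof. by case: subP => _ + _; apply. Qed.
Let PZ x r : P x -> P (x *r r). Proof. by case: subP => _ _; apply. Qed.
Let PN x : P x -> P (- x). Proof. by rewrite -scaleN1r; apply: PZ. Qed.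

Definition sub_zero : S := exist _ 0 P0.
Definition sub_add (a b : S) : S := exist _ _ (PD (svalP a) (svalP b)).
Definition sub_opp (a : S) : S := exist _ _ (PN (svalP a)).
Definition sub_scale (r : R^c) (a : S) : S := exist _ _ (PZ r (svalP a)).

Lemma sub_ext (a b : S) : sval a = sval b -> a = b.
Proof. by case: a b => a Pa [b Pb] /=; apply: eq_exist. Qed.

Lemma sub_addA : associative sub_add.
Proof. by move=> a b c; apply: sub_ext; rewrite /= addrA. Qed.
Lemma sub_addC : commutative sub_add.
Proof. by move=> a b; apply: sub_ext; rewrite /= addrC. Qed.
Lemma sub_add0 : left_id sub_zero sub_add.
Proof. by move=> a; apply: sub_ext; rewrite /= add0r. Qed.
Lemma sub_addN : left_inverse sub_zero sub_opp sub_add.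
Proof. by move=> a; apply: sub_ext; rewrite /= addNr. Qed.

HB.instance Definition _ := GRing.isZmodule.Build S sub_addA sub_addC sub_add0 sub_addN.

Lemma sub_scaleA a b (v : S) : sub_scale a (sub_scale b v) = sub_scale (a * b) v.
Proof. by apply: sub_ext; rewrite /= /ract scalerA. Qed.
Lemma sub_scale1 : left_id 1 sub_scale.
Proof. by move=> v; apply: sub_ext; rewrite /= /ract scale1r. Qed.
Lemma sub_scaleDr : right_distributive sub_scale +%R.
Proof. by move=> r u v; apply: sub_ext; rewrite /= /ract scalerDr. Qed.
Lemma sub_scaleDl (v : S) : {morph sub_scale^~ v : a b / a + b}.
Proof. by move=> a b; apply: sub_ext; rewrite /= /ract scalerDl. Qed.

HB.instance Definition _ :=
  GRing.Zmodule_isLmodule.Build R^c S sub_scaleA sub_scale1 sub_scaleDr sub_scaleDl.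

Lemma sub_val_hom : is_hom (sval : S -> M). Proof. by []. Qed.

End SubmoduleType.

Section InjectiveBaer.
Variables (R : pzRingType) (E : lmodType R^c) (D : E -> Prop).

Lemma injective_of_baer : (forall a b, D a -> D b -> D (a + b)) -> baer D -> injective_sub D.
Proof.
move=> addD baerD X Y i f hi ii hf fD.
pose G0 (z : Y * E) := exists x, z = (i x, f x).
have linG0 : lin_graph G0.
  have [[iD iZ] [fD' fZ]] := (hi, hf).
  split=> [|_ _ [x ->] [y ->]|k _ [x ->]|e [x [ix0 ->]]].
  - by exists 0; rewrite (hom0 hi) (hom0 hf).
  - by exists (x + y); rewrite iD fD'.
  - by exists (x *r k); rewrite iZ fZ.
  - by rewrite (_ : x = 0) ?(hom0 hf) //; apply: ii; rewrite -ix0 (hom0 hi).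
have G0D z : G0 z -> D z.2 by case=> x ->; apply: fD.
have [g [gD gZ gDv gG0]] := baer_criterion addD baerD linG0 G0D.
by exists g; split=> // [|x]; [split=> // x r; apply: gZ | apply: (gG0 (_, _)); exists x].
Qed.

Lemma baer_of_injective : injective_sub D -> baer D.
Proof.
move=> injD I lI h hD hZ hDv; pose S := submod_type (lI : is_submodule (I : R^c^o -> Prop)).
have val_inj : injective (sval : S -> R^c^o) by move=> a b; apply: sub_ext.
have hom_h : is_hom (fun x : S => h (sval x)).
  by split=> [a b|a r]; [apply: hD | apply: hZ]; apply: svalP.
have [g [[gD gZ] gDv gh]] :=
  injD S _ sval _ (sub_val_hom _) val_inj hom_h (fun a => hDv _ (svalP a)).
by exists g; split=> // x Ix; apply: (gh (exist _ x Ix)).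
Qed.

End InjectiveBaer.

(** * Intersections of injective submodules *)

Section GraphSubmodules.
Variables (R : pzRingType) (Q Q' : lmodType R^c) (psi : Q -> Q').
Hypothesis hom_psi : is_hom psi.

Lemma graph_submodule : is_submodule (fun z : Q * Q' => z.2 = psi z.1).
Proof.
have [psiD psiZ] := hom_psi.
by split=> [|[x _] [y _] /= -> ->|[x _] r /= ->]; rewrite ?hom0 ?psiD ?psiZ.
Qed.

Lemma graph_baer : baer (fun _ : Q => True) -> baer (fun z : Q * Q' => z.2 = psi z.1).
Proof.
have [psiD psiZ] := hom_psi; move=> baerQ J lJ h hD hZ hDv.
have [g [gD gZ _ gh]] := baerQ J lJ (fun r => (h r).1)
  (fun x y Ix Iy => congr1 fst (hD x y Ix Iy)) (fun x k Ix => congr1 fst (hZ x k Ix))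
  (fun _ _ => I).
exists (fun r => (g r, psi (g r))); split=> // [x y|x k|x Ix].
- by rewrite gD psiD.
- by rewrite gZ; congr (_, _); apply: psiZ.
- by rewrite gh //; case: (h x) (hDv x Ix) => /= ? ? ->.
Qed.

End GraphSubmodules.

Definition idempotent_generated (R : pzRingType) (C : R -> Prop) :=
  exists e, C e /\ forall x, C x -> x = e * x.

Lemma idempotent_generated_of_meets (R : pzRingType) (C : R -> Prop) : right_ideal C ->
  (forall (E : lmodType R^c) (A B : E -> Prop), is_submodule A -> is_submodule B ->
     baer A -> baer B -> ideal_ext (C : R^c -> Prop) (fun x => A x /\ B x)) ->
  idempotent_generated C.
Proof.
move=> [C0 CD CM] meet_ext.
have sub0 : is_submodule (fun v : R^c^o => v = 0).
  by split=> // [x y -> ->|x r ->]; rewrite ?addr0 // /ract scaler0.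
have [phi1 [hom1 ker1]] := char_power_kernel sub0; have [p1D p1Z] := hom1.
have phi1_inj : injective phi1.
  move=> a b ab; apply/eqP; rewrite -subr_eq0; apply/eqP/ker1.
  by rewrite homB // ab subrr.
pose Q1 := char_power R R^c^o.
have sK : is_submodule (fun q : Q1 => exists2 c, C c & q = phi1 c).
  split; first by exists 0; rewrite ?hom0.
  - by move=> _ _ [c Cc ->] [d Cd ->]; exists (c + d); rewrite ?p1D //; apply: CD.
  - by move=> _ r [c Cc ->]; exists (c * r); rewrite ?p1Z //; apply: CM.
have [phi2 [hom2 ker2]] := char_power_kernel sK.
have hom_zero : is_hom (fun _ : Q1 => 0 : char_power R Q1).
  by split=> *; rewrite ?addr0 // /ract scaler0.
pose f (r : R) : Q1 * char_power R Q1 := (phi1 r, 0).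
have fD x y : f (x + y) = f x + f y by congr (_, _); rewrite /= ?p1D ?addr0.
have fZ x r : f (x * r) = f x *r r.
  by congr (_, _); [exact: (p1Z x r) | rewrite /= /ract scaler0].
have fAB x : C x -> (f x).2 = 0 /\ (f x).2 = phi2 (f x).1.
  by move=> Cx; split=> //=; apply/esym/ker2; exists x.
have [g [_ gZ gAB gC]] := meet_ext _ _ _ (graph_submodule hom_zero) (graph_submodule hom2)
  (graph_baer hom_zero (@char_power_baer _ _)) (graph_baer hom2 (@char_power_baer _ _))
  f (fun x y _ _ => fD x y) (fun x r _ => fZ x r) fAB.
have [/= g1A g1B] := gAB 1.
have [e Ce e1] : exists2 e, C e & (g 1).1 = phi1 e by apply/ker2; rewrite -g1B g1A.
exists e; split=> // x Cx; apply: phi1_inj.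
have := congr1 fst (gZ 1 x); rewrite [(x : R^c) * 1]mul1r gC //= => ->.
by rewrite e1 p1Z.
Qed.

(** * Right ideals generated by an idempotent *)

Section RightIdeals.
Variable R : pzRingType.
Implicit Types (I J : R -> Prop) (e : R).

Lemma right_ideal0 : right_ideal (fun x : R => x = 0).
Proof. by split=> [|x y -> ->|x r ->]; rewrite ?addr0 ?mul0r. Qed.

Lemma right_idealN I x : right_ideal I -> I x -> I (- x).
Proof. by case=> _ _ IM Ix; rewrite -mulrN1; apply: IM. Qed.

Lemma right_idealB I x y : right_ideal I -> I x -> I y -> I (x - y).
Proof. by move=> hI Ix Iy; case: (hI) => _ ID _; apply: ID Ix (right_idealN hI Iy). Qed.

Lemma right_ideal_ann I e : right_ideal I -> right_ideal (fun x => I x /\ e * x = 0).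
Proof.
case=> I0 ID IM; split=> [|x y [Ix ex] [Iy ey]|x r [Ix ex]]; rewrite ?mulr0 //.
- by rewrite mulrDr ex ey addr0; split=> //; apply: ID.
- by rewrite mulrA ex mul0r; split=> //; apply: IM.
Qed.

Definition ideal_sum I J x := exists a b, [/\ I a, J b & x = a + b].

Lemma right_ideal_sum I J : right_ideal I -> right_ideal J -> right_ideal (ideal_sum I J).
Proof.
move=> [I0 ID IM] [J0 JD JM]; split; first by exists 0, 0; rewrite addr0.
- move=> _ _ [a [b [Ia Jb ->]]] [c [d [Ic Jd ->]]].
  by exists (a + c), (b + d); rewrite addrACA; split; [apply: ID | apply: JD |].
- move=> _ r [a [b [Ia Jb ->]]].
  by exists (a * r), (b * r); rewrite mulrDl; split; [apply: IM | apply: JM |].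
Qed.

Definition gen_span (g : nat -> R) x := exists n (rs : nat -> R), x = \sum_(i < n) g i * rs i.

Lemma gen_span_widen (g rs : nat -> R) n m : (n <= m)%N ->
  \sum_(i < n) g i * rs i = \sum_(i < m) g i * (if (i < n)%N then rs i else 0).
Proof.
move=> le_nm; rewrite (big_ord_widen m (fun i => g i * rs i) le_nm) big_mkcond.
by apply: eq_bigr => i _; case: ifP; rewrite ?mulr0.
Qed.

Lemma right_ideal_gen_span g : right_ideal (gen_span g).
Proof.
split; first by exists 0%N, (fun _ => 0); rewrite big_ord0.
- move=> _ _ [n [rs ->]] [m [ts ->]]; exists (maxn n m).
  exists (fun i => (if (i < n)%N then rs i else 0) + (if (i < m)%N then ts i else 0)).
  rewrite (gen_span_widen g rs (leq_maxl n m)) (gen_span_widen g ts (leq_maxr n m)).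
  rewrite -big_split.
  by apply: eq_bigr => i _; rewrite mulrDr.
- move=> _ r [n [rs ->]]; exists n, (fun i => rs i * r).
  by rewrite mulr_suml; apply: eq_bigr => i _; rewrite mulrA.
Qed.

Lemma gen_span_gen g n : gen_span g (g n).
Proof.
exists n.+1, (fun i => (i == n)%:R).
by rewrite big_ord_recr /= eqxx mulr1 big1 ?add0r // => i _; rewrite (ltn_eqF (ltn_ord i)) mulr0.
Qed.

Lemma summand_idempotent_generated I :
  every_right_ideal_summand R -> right_ideal I -> idempotent_generated I.
Proof.
move=> summand hI; have [J [hJ IJ dec]] := summand I hI.
have [e [b [Ie Jb eb1]]] := dec 1; exists e; split=> // x Ix.
have [_ _ IM] := hI; have [_ _ JM] := hJ.
have bx : x - e * x = b * x by rewrite -[x in x - _]mul1r eb1 mulrDl addrAC subrr add0r.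
apply/eqP; rewrite -subr_eq0 bx; apply/eqP/IJ; last exact: JM.
by rewrite -bx; apply: right_idealB => //; apply: IM.
Qed.

Lemma idempotent_generated_ext (E : lmodType R^c) (D : E -> Prop) I :
  right_ideal I -> idempotent_generated I -> ideal_ext (I : R^c -> Prop) D.
Proof.
move=> [_ _ IM] [e [Ie eI]] h hD hZ hDv; exists (fun r => h (e * r)); split.
- by move=> x y; rewrite mulrDr hD //; apply: IM.
- by move=> x k; rewrite [(k : R^c) * x]/((x : R) * k) mulrA -hZ //; apply: IM.
- by move=> x; apply/hDv/IM.
- by move=> x /eI <-.
Qed.

Section CountablyGenerated.
Hypothesis cg_idem :
  forall C : R -> Prop, right_ideal C -> countably_generated C -> idempotent_generated C.

Lemma idempotent_generated_of_countable I : right_ideal I -> idempotent_generated I.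
Proof.
move=> hI; pose span (s : seq R) x := exists rs : nat -> R, x = \sum_(i < size s) s`_i * rs i.
pose pick s := if pselect (exists x, I x /\ ~ span s x) is left ex then projT1 (cid ex) else 0.
have pickI s : I (pick s).
  by rewrite /pick; case: pselect => [ex|_]; [case: cid => ? [] | case: hI].
have pick_new s : (exists x, I x /\ ~ span s x) -> ~ span s (pick s).
  by rewrite /pick; case: pselect => // ex _; case: cid => ? [].
(* g n is chosen in I outside the span of g 0, ..., g n.-1 whenever possible *)
pose gens n := iter n (fun s => rcons s (pick s)) [::]; pose g n := pick (gens n).
have gensE n : gens n = mkseq g n.
  by elim: n => //= n IH; rewrite mkseqS /g -IH.
have spanE n x : span (gens n) x <-> exists rs : nat -> R, x = \sum_(i < n) g i * rs i.
  rewrite /span gensE size_mkseq; split=> -[rs ->]; exists rs;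
  by apply: eq_bigr => i _; rewrite nth_mkseq.
have [e [[N [rs ers]] eC]] :=
  cg_idem (right_ideal_gen_span g) (ex_intro _ g (fun _ => iff_refl _)).
have I_span x : I x -> span (gens N) x.
  move=> Ix; apply: contrapT => nspan; apply: (pick_new (gens N)); first by exists x.
  change (span (gens N) (g N)); apply/spanE; exists (fun i => rs i * g N).
  rewrite {1}(eC _ (gen_span_gen g N)) ers mulr_suml.
  by apply: eq_bigr => i _; rewrite mulrA.
have gI n : I (g n) by apply: pickI.
have spanI x : gen_span g x -> I x.
  case: hI => I0 ID IM [n [ts ->]].
  by apply: (big_ind I) => // i _; apply: IM.
exists e; split; first by apply: spanI; exists N, rs.
by move=> x /I_span /spanE [ts xE]; apply: eC; exists N, ts.
Qed.

End CountablyGenerated.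

Section Artinian.
Hypothesis idem : forall I : R -> Prop, right_ideal I -> idempotent_generated I.

Lemma idempotent_generated_summand : every_right_ideal_summand R.
Proof.
move=> I hI; have [e [Ie eI]] := idem hI; have ee : e * e = e by rewrite -eI.
exists (fun x => e * x = 0); split.
- split=> [|x y ex ey|x r ex]; first by rewrite mulr0.
  + by rewrite mulrDr ex ey addr0.
  + by rewrite mulrA ex mul0r.
- by move=> x /eI xe ex; rewrite xe ex.
- move=> x; exists (e * x), (x - e * x); split; last by rewrite addrC subrK.
  + by case: hI => _ _; apply.
  + by rewrite mulrBr mulrA ee subrr.
Qed.

Lemma idempotent_generated_artinian : right_artinian R.
Proof.
move=> I hI Idec; have [e eP] := choice (fun n => idem (hI n.+1)).
have e_id n x : I n.+1 x -> x = e n * x by case: (eP n) => _; apply.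
have ee n : e n * e n = e n by rewrite -e_id //; case: (eP n).
(* J n is the sum of the complements D m of I m.+1 in I m, m < n; it meets I n trivially. *)
pose D n x := I n x /\ e n * x = 0.
pose J := fix J n := if n is m.+1 then ideal_sum (J m) (D m) else (fun x : R => x = 0).
have hJ n : right_ideal (J n).
  elim: n => [|n IH]; first exact: right_ideal0.
  by apply: right_ideal_sum => //; apply: right_ideal_ann.
have J_mono n m x : (n <= m)%N -> J n x -> J m x.
  move=> /subnK <-; elim: (m - n)%N => // k IH /IH Jx; rewrite addSn.
  by exists x, 0; split=> //; [case: (right_ideal_ann (e (k + n)) (hI (k + n))) | rewrite addr0].
have JI0 n x : J n x -> I n x -> x = 0.
  elim: n x => [//|n IH] _ [b [d [Jb [Id ed] ->]]] Ibd.
  have b0 : b = 0.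
    apply: IH Jb _; rewrite -(addrK d b).
    exact: right_idealB (hI n) (Idec _ _ Ibd) Id.
  by move: Ibd; rewrite b0 add0r => /e_id ->.
pose U x := exists n, J n x.
have hU : right_ideal U.
  split; first by exists 0%N.
  - move=> x y [n Jx] [m Jy]; exists (maxn n m); case: (hJ (maxn n m)) => _ + _; apply.
    + exact: J_mono (leq_maxl n m) Jx.
    + exact: J_mono (leq_maxr n m) Jy.
  - by move=> x r [n Jx]; exists n; case: (hJ n) => _ _; apply.
have [u [[N JNu] uU]] := idem hU.
have UJ x : U x -> J N x by move=> /uU ->; case: (hJ N) => _ _; apply.
have stable m x : (N <= m)%N -> I m x -> I m.+1 x.
  move=> Nm Ix; have Iex : I m.+1 (e m * x) by case: (hI m.+1) => _ _; apply; case: (eP m).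
  suff d0 : x - e m * x = 0 by rewrite (_ : x = e m * x) //; apply/eqP; rewrite -subr_eq0 d0.
  have Dd : D m (x - e m * x).
    split; first exact: right_idealB (hI m) Ix (Idec _ _ Iex).
    by rewrite mulrBr mulrA ee subrr.
  apply: (JI0 m) Dd.1; apply: J_mono Nm _; apply: UJ; exists m.+1.
  by exists 0, (x - e m * x); split; [case: (hJ m) | | rewrite add0r].
exists N => m /subnK <- x; elim: (m - N)%N => // k IH; rewrite addSn.
by split=> [/Idec /IH //|/IH /stable]; apply; rewrite leq_addl.
Qed.

End Artinian.

Lemma semisimple_artinianP :
  semisimple_artinian R <-> forall I, right_ideal I -> idempotent_generated I.
Proof.
split=> [[_ summand] I|idem]; first exact: summand_idempotent_generated.
by split; [apply: idempotent_generated_artinian | apply: idempotent_generated_summand].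
Qed.

End RightIdeals.

Theorem proposition1p1 (R : pzRingType) :
  (semisimple_artinian R <->
     (forall (E : lmodType R^c) (A B : E -> Prop),
        is_submodule A -> is_submodule B ->
        injective_sub A -> injective_sub B ->
        injective_sub (fun x => A x /\ B x)))
  /\
  (semisimple_artinian R <->
     (forall (E : lmodType R^c) (A B : E -> Prop),
        is_submodule A -> is_submodule B ->
        aleph0_injective_sub A -> aleph0_injective_sub B ->
        aleph0_injective_sub (fun x => A x /\ B x))).
Proof.
have addAB (E : lmodType R^c) (A B : E -> Prop) : is_submodule A -> is_submodule B ->
    forall a b, A a /\ B a -> A b /\ B b -> A (a + b) /\ B (a + b).
  by move=> [_ AD _] [_ BD _] a b [Aa Ba] [Ab Bb]; split; [apply: AD | apply: BD].
split; split.
- move=> /semisimple_artinianP idem E A B sA sB _ _.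
  apply: injective_of_baer (addAB _ _ _ sA sB) _ => I hI.
  exact: (@idempotent_generated_ext R E _ I hI (idem I hI)).
- move=> meet_inj; apply/semisimple_artinianP => C hC.
  apply: idempotent_generated_of_meets => // E A B sA sB bA bB.
  have [[_ AD _] [_ BD _]] := (sA, sB).
  have injA := injective_of_baer AD bA; have injB := injective_of_baer BD bB.
  exact: baer_of_injective (meet_inj E A B sA sB injA injB) C hC.
- move=> /semisimple_artinianP idem E A B _ _ _ _ I f hI _.
  exact: (@idempotent_generated_ext R E (fun x => A x /\ B x) I hI (idem I hI) f).
- move=> meet_inj; apply/semisimple_artinianP/idempotent_generated_of_countable => C hC cgC.
  apply: idempotent_generated_of_meets => // E A B sA sB bA bB.
  have aleph0 (D : E -> Prop) : baer D -> aleph0_injective_sub D by move=> bD I f hI _; apply: bD.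
  by move=> h; apply: meet_inj E A B sA sB (aleph0 _ bA) (aleph0 _ bB) C h hC cgC.
Qed.
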